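(* There are infinitely many connected graphs $G$ with $\omega(G)<\chi(G)$ for which $\overline{\mathrm{scs}}(G)=n-2$, where $n$ is the order of $G$.
   Context: All graphs are finite and simple; $\omega(G)$ is the clique number. For a graph $G=(V,E)$ with $k=\chi(G)$, a proper $k$-colouring is a map $c:V\to[k]$ with $c(u)\neq c(v)$ for every edge $uv$. A set $S\subseteq V$ is a determining set for $(G,c)$ if there is no proper $k$-colouring $c'\neq c$ with $c'(s)=c(s)$ for all $s\in S$; a critical set is an inclusion-minimal determining set. $\mathrm{scs}(G,c)$ is the size of a smallest critical set for $(G,c)$, and $\overline{\mathrm{scs}}(G)$ is the maximum of $\mathrm{scs}(G,c)$ over all proper $\chi(G)$-colourings $c$ of $G$. *)

From mathcomp Require Import all_boot.
Set Implicit Arguments. Unset Strict Implicit. Unset Printing Implicit Defensive.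

Section Graphs.
Variable T : finType.
Variable e : rel T.

Definition simple_graph : Prop := symmetric e /\ irreflexive e.

Definition connected_graph : Prop := forall x y : T, connect e x y.

Definition clique (S : {set T}) : bool :=
  [forall x in S, forall y in S, (x != y) ==> e x y].

Definition omega : nat := \max_(S : {set T} | clique S) #|S|.

Definition proper_col (k : nat) (c : {ffun T -> 'I_k}) : bool :=
  [forall x, forall y, ((x != y) && e x y) ==> (c x != c y)].

Definition colourable (k : nat) : bool :=
  [exists c : {ffun T -> 'I_k}, proper_col c].

(* chromatic number: least k admitting a proper k-colouring
   (#|T| colours always suffice, so the minimum over k <= #|T| is correct) *)
Definition chi : nat := \big[minn/#|T|]_(k < #|T|.+1 | colourable k) (k : nat).

Definition determining (k : nat) (c : {ffun T -> 'I_k}) (S : {set T}) : bool :=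
  [forall c' : {ffun T -> 'I_k},
     (proper_col c' && [forall s in S, c' s == c s]) ==> (c' == c)].

Definition critical (k : nat) (c : {ffun T -> 'I_k}) (S : {set T}) : bool :=
  determining c S && [forall S' : {set T}, (S' \proper S) ==> ~~ determining c S'].

(* size of a smallest critical set (critical sets always exist, of size <= #|T|) *)
Definition scs (k : nat) (c : {ffun T -> 'I_k}) : nat :=
  \big[minn/#|T|]_(S : {set T} | critical c S) #|S|.

Definition scs_bar : nat :=
  \max_(c : {ffun T -> 'I_chi} | proper_col c) scs c.

End Graphs.

From mathcomp Require Import all_boot zify.
Set Implicit Arguments. Unset Strict Implicit. Unset Printing Implicit Defensive.

(* The odd cycles C_(2q+1), q >= 2, are connected, triangle-free and not
   2-colourable, so omega = 2 < 3 = chi.  In a proper 3-colouring, a vertex whose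
   two neighbours carry different colours is forced: its colour is determined by
   theirs.  Dropping two non-adjacent forced vertices therefore leaves a
   determining set, so scs <= n - 2.  For the colouring 0101...01 2, any vertex
   among 1, ..., 2q - 2 missing from a set S can be recoloured 2, and if the ends
   0, 2q - 1, 2q are all missing they can be recoloured 2, 2, 0; so every
   determining set misses at most two vertices, and scs = n - 2. *)

Lemma bigmin_leq (I : eqType) (r : seq I) (P : pred I) (F : I -> nat) idx j :
  j \in r -> P j -> \big[minn/idx]_(i <- r | P i) F i <= F j.
Proof.
elim: r => // i r IH; rewrite inE big_cons => /predU1P [<- -> | jr Pj].
  exact: geq_minl.
by case: ifP => _; rewrite ?geq_min IH ?orbT.
Qed.

Lemma leq_bigmin (I : Type) (r : seq I) (P : pred I) (F : I -> nat) idx m :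
  m <= idx -> (forall i, P i -> m <= F i) -> m <= \big[minn/idx]_(i <- r | P i) F i.
Proof. by move=> m_idx m_F; elim/big_ind: _ => // x y; rewrite leq_min => -> ->. Qed.

Section Colourings.
Variables (T : finType) (e : rel T).
Hypothesis e_irr : irreflexive e.

Lemma proper_colP k (c : {ffun T -> 'I_k}) :
  reflect (forall x y, e x y -> c x != c y) (proper_col e c).
Proof.
apply: (iffP forallP) => [c_pr x y exy | c_adj x].
  have /forallP/(_ y) := c_pr x; rewrite exy andbT => /implyP; apply.
  by apply: contraTneq exy => ->; rewrite e_irr.
by apply/forallP => y; apply/implyP => /andP [_]; apply: c_adj.
Qed.

Lemma triangle_free_omega_le2 : (forall x y z, e x y -> e y z -> ~~ e z x) -> omega e <= 2.
Proof.
move=> no_triangle; apply/bigmax_leqP => S /forall_inP S_clique.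
rewrite leqNgt; apply/card_gt2P => -[x [y [z [[xS yS zS] [xy yz zx]]]]].
have adj u v : u \in S -> v \in S -> u != v -> e u v.
  by move=> uS vS uv; move/forall_inP/(_ v vS)/implyP: (S_clique u uS); apply.
by have := no_triangle x y z (adj _ _ xS yS xy) (adj _ _ yS zS yz); rewrite adj.
Qed.

Lemma chi_eq k :
  colourable e k -> k <= #|T| -> (forall j, j < k -> ~~ colourable e j) -> chi e = k.
Proof.
move=> col_k k_le col_lt; apply/eqP; rewrite eqn_leq; apply/andP; split.
  have k_ord : k < #|T|.+1 by [].
  exact: (bigmin_leq _ _ (mem_index_enum (Ordinal k_ord)) col_k).
apply: leq_bigmin => // j col_j; rewrite leqNgt; apply: contraL col_j; exact: col_lt.
Qed.

Section Critical.
Variables (k : nat) (c : {ffun T -> 'I_k}).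

Lemma exists_critical_subset S :
  determining e c S -> exists2 S', critical e c S' & S' \subset S.
Proof.
move=> S_det; pose P := [pred X : {set T} | determining e c X && (X \subset S)].
have PS : P S by rewrite inE S_det subxx.
case: (arg_minnP (fun X : {set T} => #|X|) PS) => X /andP [X_det XS] X_min.
exists X => //; rewrite /critical X_det; apply/forallP => Y; apply/implyP => YX.
apply/negP => Y_det; have := X_min Y; rewrite inE Y_det (subset_trans (proper_sub YX) XS).
by move=> /(_ isT); rewrite leqNgt (proper_card YX).
Qed.

Lemma scs_leq S : determining e c S -> scs e c <= #|S|.
Proof.
case/exists_critical_subset => S' S'_crit S'S.
apply: leq_trans (subset_leq_card S'S).
exact: (bigmin_leq _ _ (mem_index_enum S') S'_crit).
Qed.

Lemma leq_scs m :
  m <= #|T| -> (forall S, determining e c S -> m <= #|S|) -> m <= scs e c.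
Proof. by move=> m_le m_det; apply: leq_bigmin => // S /andP [/m_det]. Qed.

Lemma determining_eq S c' :
  determining e c S -> proper_col e c' -> {in S, c' =1 c} -> c' = c.
Proof.
move=> /forallP/(_ c')/implyP c_det c'_pr c'c; apply/eqP/c_det.
by rewrite c'_pr; apply/forall_inP => s /c'c ->.
Qed.

Definition forced x := [forall i, (i != c x) ==> [exists y, e x y && (c y == i)]].

(* A recolouring [c'] that agrees with [c] off [I] gives [x] in [I] a colour
   already carried by one of its neighbours, which lie off [I]. *)
Lemma determining_setC (I : {set T}) :
  {in I &, forall x y, ~~ e x y} -> {in I, forall x, forced x} -> determining e c (~: I).
Proof.
move=> I_indep I_forced; apply/forallP => c'.
apply/implyP => /andP [/proper_colP c'_adj /forall_inP c'c].
apply/eqP/ffunP => x; apply/eqP; case: (boolP (x \in I)) => [xI | xNI]; last first.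
  by apply: c'c; rewrite inE.
apply: contraT => c'x; have /forallP/(_ (c' x)) := I_forced x xI.
rewrite c'x => /existsP [y /andP [exy /eqP cy]].
have yNI : y \notin I by apply: contraL exy => yI; apply: I_indep.
by have := c'_adj _ _ exy; rewrite (eqP (c'c y _)) ?inE // cy eqxx.
Qed.
End Critical.

Lemma forced_of_3col (c : {ffun T -> 'I_3}) x y z :
  proper_col e c -> e x y -> e x z -> c y != c z -> forced c x.
Proof.
move=> /proper_colP c_pr exy exz cyz; apply/forallP => i; apply/implyP => icx.
have : (i == c y) || (i == c z).
  move: icx cyz (c_pr _ _ exy) (c_pr _ _ exz); rewrite -!(inj_eq val_inj) /=.
  have := ltn_ord i; have := ltn_ord (c x); have := ltn_ord (c y).
  by have := ltn_ord (c z); lia.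
by case/orP => /eqP ->; apply/existsP; [exists y | exists z]; rewrite eqxx andbT.
Qed.
End Colourings.

Section OddCycle.
Variable q : nat.
Hypothesis q_gt1 : 1 < q.
Local Notation n := (2 * q).+1.

Definition cycle_adj (x y : nat) : bool :=
  [|| y == x.+1, x == y.+1, (x == 0) && (y == 2 * q) | (y == 0) && (x == 2 * q)].

Definition cycle_graph : rel 'I_n := fun x y => cycle_adj x y.

Lemma cycle_graph_sym : symmetric cycle_graph.
Proof. by move=> x y; rewrite /cycle_graph /cycle_adj; apply/idP/idP; lia. Qed.

Lemma cycle_graph_irr : irreflexive cycle_graph.
Proof. by move=> x; rewrite /cycle_graph /cycle_adj; apply/negP; lia. Qed.

Local Notation adjP := (proper_colP cycle_graph_irr).

Lemma cycle_graph_triangle_free x y z :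
  cycle_graph x y -> cycle_graph y z -> ~~ cycle_graph z x.
Proof.
rewrite /cycle_graph /cycle_adj => xy yz; apply/negP.
by move: xy yz (ltn_ord x) (ltn_ord y) (ltn_ord z); lia.
Qed.

Definition vtx (t : nat) : 'I_n := inord (t %% n).

Lemma val_vtx t : vtx t = t %% n :> nat.
Proof. by rewrite /vtx inordK // ltn_pmod. Qed.

Lemma vtx_val (x : 'I_n) : vtx x = x.
Proof. by apply: ord_inj; rewrite val_vtx modn_small. Qed.

Lemma vtxDn t : vtx (t + n) = vtx t.
Proof. by apply: ord_inj; rewrite !val_vtx modnDr. Qed.

Lemma modnD_small t d : d < n ->
  (t + d) %% n = if t %% n + d < n then t %% n + d else t %% n + d - n.
Proof.
move=> d_lt; rewrite -modnDml; have := ltn_pmod t (ltn0Sn (2 * q)).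
set r := t %% n => r_lt; case: ifP => [lt | ge]; first by rewrite modn_small.
by rewrite {1}(_ : r + d = r + d - n + n) ?modnDr ?modn_small; lia.
Qed.

Lemma cycle_graph_vtxD t d : d < n ->
  cycle_graph (vtx t) (vtx (t + d)) = (d == 1) || (d == 2 * q).
Proof.
move=> d_lt; rewrite /cycle_graph /cycle_adj !val_vtx modnD_small //.
have := ltn_pmod t (ltn0Sn (2 * q)); set r := t %% n => r_lt.
by case: ifP => ?; apply/idP/idP; lia.
Qed.

Lemma vtxD_eq t d : d < n -> (vtx t == vtx (t + d)) = (d == 0).
Proof.
move=> d_lt; rewrite -(inj_eq val_inj) /= !val_vtx modnD_small //.
have := ltn_pmod t (ltn0Sn (2 * q)); set r := t %% n => r_lt.
by case: ifP => ?; apply/idP/idP; lia.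
Qed.

Lemma cycle_graph_vtxS t : cycle_graph (vtx t) (vtx t.+1).
Proof. by rewrite -[t.+1]addn1 cycle_graph_vtxD //; lia. Qed.

Lemma cycle_graph_connected : connected_graph cycle_graph.
Proof.
have walk t d : connect cycle_graph (vtx t) (vtx (t + d)).
  elim: d => [|d IH]; first by rewrite addn0.
  by apply: connect_trans IH (connect1 _); rewrite addnS cycle_graph_vtxS.
move=> x y; have := walk x (n - x + y).
by rewrite (_ : x + _ = y + n) ?vtxDn ?vtx_val //; have := ltn_ord x; lia.
Qed.

Lemma omega_cycle : omega cycle_graph <= 2.
Proof. exact: triangle_free_omega_le2 cycle_graph_triangle_free. Qed.

Section CycleColourings.
Variables (k : nat) (c : {ffun 'I_n -> 'I_k}).
Hypothesis c_proper : proper_col cycle_graph c.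
Local Notation h t := (c (vtx t)).

(* If no vertex among [v + 2, v + 4, ..., v + 2q] had two differently coloured
   neighbours, the colour of [v + 1] would be copied around the odd cycle onto
   its neighbour [v]. *)
Lemma cycle_colour_window v : exists2 s, s < q & h (v + 2 * s).+1 != h (v + 2 * s).+3.
Proof.
have [/existsP [s s_ok] | /existsPn same] :=
  boolP [exists s : 'I_q, h (v + 2 * s).+1 != h (v + 2 * s).+3]; first by exists s.
have copy s : s <= q -> h v.+1 = h (v + 2 * s).+1.
  elim: s => [|s IH] s_le; first by rewrite addn0.
  rewrite IH 1?ltnW //; have /negPn/eqP -> := same (Ordinal s_le).
  by rewrite (_ : (v + 2 * s).+3 = (v + 2 * s.+1).+1) //; lia.
have := copy q (leqnn q); rewrite (_ : (v + 2 * q).+1 = v + n) ?vtxDn; last lia.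
by move=> copied; have /adjP/(_ _ _ (cycle_graph_vtxS v)) := c_proper; rewrite copied eqxx.
Qed.

Lemma cycle_not_2colourable : 2 < k.
Proof.
have [s _] := cycle_colour_window 0; set t := (0 + 2 * s).+1 => ht.
have /adjP c_adj := c_proper.
move: ht (c_adj _ _ (cycle_graph_vtxS t)) (c_adj _ _ (cycle_graph_vtxS t.+1)).
rewrite -!(inj_eq val_inj) /=.
by have := ltn_ord (h t); have := ltn_ord (h t.+1); have := ltn_ord (h t.+2); lia.
Qed.
End CycleColourings.

Section CycleThreeColourings.
Variable c : {ffun 'I_n -> 'I_3}.
Hypothesis c_proper : proper_col cycle_graph c.
Local Notation h t := (c (vtx t)).

Lemma forced_vtx t : h t != h t.+2 -> forced cycle_graph c (vtx t.+1).
Proof.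
apply: (forced_of_3col cycle_graph_irr (y := vtx t) (z := vtx t.+2) c_proper) => //.
  by rewrite cycle_graph_sym cycle_graph_vtxS.
exact: cycle_graph_vtxS.
Qed.

Lemma cycle_forced_pair_of t u : t + 2 <= u <= t + (2 * q - 1) ->
  h t != h t.+2 -> h u != h u.+2 ->
  exists a b, [/\ a != b, ~~ cycle_graph a b, forced cycle_graph c a & forced cycle_graph c b].
Proof.
move=> tu ht hu; exists (vtx t.+1), (vtx u.+1); split; try exact: forced_vtx.
  by rewrite (_ : u.+1 = t.+1 + (u - t)) ?vtxD_eq; lia.
by rewrite (_ : u.+1 = t.+1 + (u - t)) ?cycle_graph_vtxD; lia.
Qed.

(* Three windows of [cycle_colour_window]: the second one starts at the first
   forced vertex [a]; if its forced vertex is the neighbour [a - 1] of [a], the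
   third one, starting at [a - 1], yields [a + 1] or a vertex non-adjacent to [a]. *)
Lemma cycle_forced_pair :
  exists a b, [/\ a != b, ~~ cycle_graph a b, forced cycle_graph c a & forced cycle_graph c b].
Proof.
have [s1 _] := cycle_colour_window c_proper 0; set t1 := (0 + 2 * s1).+1 => h1.
have [s2 s2_lt h2] := cycle_colour_window c_proper t1.+1.
have [s2_small | s2_max] := ltnP s2 q.-1.
  by apply: (cycle_forced_pair_of (t := t1) (u := (t1.+1 + 2 * s2).+1)) => //; lia.
have [s3 s3_lt h3] := cycle_colour_window c_proper t1.
have [s3_0 | s3_pos] := posnP s3.
  by apply: (cycle_forced_pair_of (t := (t1 + 2 * s3).+1) (u := (t1.+1 + 2 * s2).+1)); lia.
by apply: (cycle_forced_pair_of (t := t1) (u := (t1 + 2 * s3).+1)); lia.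
Qed.
End CycleThreeColourings.

Lemma scs_cycle_leq (c : {ffun 'I_n -> 'I_3}) :
  proper_col cycle_graph c -> scs cycle_graph c <= n - 2.
Proof.
move=> c_proper; have [a [b [ab nab fa fb]]] := cycle_forced_pair c_proper.
have ab_det : determining cycle_graph c (~: [set a; b]).
  apply: (determining_setC cycle_graph_irr) => [x y | x].
    rewrite !inE => /orP [] /eqP -> /orP [] /eqP ->; rewrite ?cycle_graph_irr //.
    by rewrite cycle_graph_sym.
  by rewrite !inE => /orP [] /eqP ->.
by apply: leq_trans (scs_leq ab_det) _; rewrite cardsCs setCK cards2 ab card_ord.
Qed.

Definition colouring_of (g : nat -> nat) : {ffun 'I_n -> 'I_3} :=
  [ffun x : 'I_n => inord (g x)].

Lemma colouring_of_proper (g : nat -> nat) :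
  (forall x : 'I_n, g x < 3) -> (forall x y : 'I_n, cycle_adj x y -> g x != g y) ->
  proper_col cycle_graph (colouring_of g).
Proof.
move=> g_lt g_adj; apply/adjP => x y xy.
by rewrite !ffunE -(inj_eq val_inj) /= !inordK ?g_adj.
Qed.

Definition alt_colour (x : nat) : nat := if x == 2 * q then 2 else x %% 2.

Lemma alt_colour_proper : proper_col cycle_graph (colouring_of alt_colour).
Proof.
apply: colouring_of_proper => [x | x y]; rewrite /alt_colour /cycle_adj.
  by case: ifP; lia.
by have := ltn_ord x; have := ltn_ord y; do !case: ifP => ?; lia.
Qed.

Section AltColourDetermining.
Variable S : {set 'I_n}.
Hypothesis S_det : determining cycle_graph (colouring_of alt_colour) S.

Lemma alt_colour_rigid (g : nat -> nat) : (forall x : 'I_n, g x < 3) ->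
  (forall x y : 'I_n, cycle_adj x y -> g x != g y) ->
  {in S, forall x : 'I_n, g x = alt_colour x} -> forall x : 'I_n, g x = alt_colour x.
Proof.
move=> g_lt g_adj gS x.
have agree : {in S, colouring_of g =1 colouring_of alt_colour}.
  by move=> y yS; rewrite !ffunE gS.
have := determining_eq S_det (colouring_of_proper g_lt g_adj) agree.
move/(congr1 (fun c : {ffun 'I_n -> 'I_3} => val (c x))); rewrite !ffunE /= !inordK //.
by rewrite /alt_colour; case: ifP; lia.
Qed.

Lemma alt_colour_inner_mem (x : 'I_n) : 0 < x < 2 * q - 1 -> x \in S.
Proof.
move=> x_inner; apply: contraT => xNS.
pose g (j : nat) := if j == x then 2 else alt_colour j.
have : g x = alt_colour x.
  apply: alt_colour_rigid => [y | y z | y yS]; rewrite /g /alt_colour.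
  - by do !case: ifP => ?; lia.
  - by have := ltn_ord y; have := ltn_ord z; rewrite /cycle_adj; do !case: ifP => ?; lia.
  - by rewrite ifF //; apply: contraNF xNS => /eqP/ord_inj <-.
by rewrite /g /alt_colour eqxx; case: ifP; lia.
Qed.

Lemma alt_colour_end_mem : [exists x in S, (x == 0 :> nat) || (2 * q - 1 <= x)].
Proof.
apply: contraT => /exists_inPn S_inner.
pose g (j : nat) := if j == 0 then 2 else if j == 2 * q - 1 then 2
                    else if j == 2 * q then 0 else alt_colour j.
have : g (ord0 : 'I_n) = alt_colour (ord0 : 'I_n).
  apply: alt_colour_rigid => [y | y z | y yS]; rewrite /g /alt_colour.
  - by do !case: ifP => ?; lia.
  - by have := ltn_ord y; have := ltn_ord z; rewrite /cycle_adj; do !case: ifP => ?; lia.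
  - by move: (S_inner y yS); do !case: ifP => ?; lia.
by rewrite /g /alt_colour /=; case: ifP; lia.
Qed.

Lemma alt_colour_determining_card : n - 2 <= #|S|.
Proof.
pose E : {set 'I_n} := [set ord0; inord (2 * q - 1); ord_max].
have in_E (y : 'I_n) : (y == 0 :> nat) || (2 * q - 1 <= y) -> y \in E.
  by rewrite !inE -!(inj_eq val_inj) /= inordK; have := ltn_ord y; lia.
have E_card : #|E| <= 3 by rewrite /E -setUA !cardsU1 cards1; do 2!case: (_ \notin _).
have [x xS x_end] := exists_inP alt_colour_end_mem.
have SC_sub : ~: S \subset E :\ x.
  apply/subsetP => y; rewrite in_setC in_setD1 => yNS; apply/andP; split.
    by apply: contraNneq yNS => ->.
  by apply: in_E; apply: contraR yNS => y_inner; apply: alt_colour_inner_mem; lia.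
rewrite cardsCs card_ord leq_sub2l //; apply: leq_trans (subset_leq_card SC_sub) _.
by have := cardsD1 x E; rewrite in_E //= => E_x; rewrite -(leq_add2l 1) -E_x.
Qed.
End AltColourDetermining.

Lemma chi_cycle : chi cycle_graph = 3.
Proof.
apply: chi_eq.
- by apply/existsP; exists (colouring_of alt_colour); exact: alt_colour_proper.
- by rewrite card_ord; lia.
- by move=> j j_lt; apply/existsP => -[c /cycle_not_2colourable]; lia.
Qed.

Lemma scs_bar_cycle : scs_bar cycle_graph = n - 2.
Proof.
rewrite /scs_bar; move: (chi cycle_graph) chi_cycle => k k3; subst k.
apply/eqP; rewrite eqn_leq; apply/andP; split.
  by apply/bigmax_leqP => c; apply: scs_cycle_leq.
apply: leq_trans (leq_bigmax_cond _ alt_colour_proper).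
apply: leq_scs => [|S]; first by rewrite card_ord leq_subr.
exact: alt_colour_determining_card.
Qed.
End OddCycle.

Theorem proposition1 :
  forall N : nat, exists (n : nat) (e : rel 'I_n),
    [/\ N <= n, simple_graph e, connected_graph e,
        omega e < chi e & scs_bar e = n - 2].
Proof.
move=> N; have q_gt1 : 1 < N + 2 by rewrite addn2.
exists (2 * (N + 2)).+1, (@cycle_graph (N + 2)); split.
- lia.
- by split; [exact: cycle_graph_sym | exact: cycle_graph_irr].
- exact: cycle_graph_connected.
- by rewrite chi_cycle // (leq_ltn_trans (omega_cycle q_gt1)).
- exact: scs_bar_cycle.
Qed.
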